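(* For all $d,k,N\in\mathbb{N}$, all $\mathbf{x}\in\mathcal{G}_{d,k}$ and all $u\in\mathbb{N}^N$ with $u_1+\dots+u_N\in N\mathbb{Z}$, $$\mathsf{bary}(\mathbf{x}^{u_1},\dots,\mathbf{x}^{u_N})=\mathbf{x}^{(u_1+\dots+u_N)/N}.$$
   Context: $T_{d,k}=\bigoplus_{\ell=0}^k(\mathbb{R}^d)^{\otimes\ell}$ is the truncated tensor algebra with product the bilinear extension of the tensor product of levels, set to $0$ when the total level exceeds $k$. $\mathfrak{g}_{d,k}$ is the smallest Lie subalgebra (commutator bracket) of $T_{d,k}$ containing $e_1,\dots,e_d\in\mathbb{R}^d$; $\exp(\mathbf{z})=\sum_{\ell=0}^k\mathbf{z}^{\otimes\ell}/\ell!$; $\mathcal{G}_{d,k}=\exp(\mathfrak{g}_{d,k})$, a group under the product of $T_{d,k}$ (powers $\mathbf{x}^n$ are group powers), with $\log=\exp^{-1}$, $\log(\mathbf{s})=\sum_{\ell\ge1}\frac{(-1)^{\ell+1}}{\ell}(\mathbf{s}-1)^{\otimes\ell}$. For $\mathbf{x}\in\mathcal{G}_{d,k}^N$, $\mathsf{bary}(\mathbf{x})$ is the unique $\mathbf{m}\in\mathcal{G}_{d,k}$ with $\sum_{i=1}^N\log(\mathbf{m}^{-1}\mathbf{x}_i)=0$. *)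

(* A tensor is represented by its coefficient function on words over the
   alphabet 'I_d (basis e_{w_1} (x) ... (x) e_{w_n} of level n = size w).
   Elements of T_{d,k} are those vanishing on words of length > k; all
   operations below preserve this (the product truncates at level k). *)
From HB Require Import structures.
From mathcomp Require Import all_boot all_order all_algebra.
From mathcomp Require Import reals.
From Stdlib Require Import ClassicalEpsilon.
Set Implicit Arguments. Unset Strict Implicit. Unset Printing Implicit Defensive.
Import Order.TTheory GRing.Theory Num.Theory.
Local Open Scope ring_scope.

Section TruncTensor.
Variables (R : realType) (d k : nat).

Definition tens := seq 'I_d -> R.

Definition tzero : tens := fun _ => 0.
Definition tone : tens := fun w => if w == [::] then 1 else 0.
Definition tadd (a b : tens) : tens := fun w => a w + b w.
Definition topp (a : tens) : tens := fun w => - a w.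
Definition tsub (a b : tens) : tens := fun w => a w - b w.
Definition tscale (c : R) (a : tens) : tens := fun w => c * a w.

Definition tmul (a b : tens) : tens := fun w =>
  if (size w <= k)%N then \sum_(i < (size w).+1) a (take i w) * b (drop i w)
  else 0.

Definition tpow (a : tens) (n : nat) : tens := iter n (tmul a) tone.

Definition texp (z : tens) : tens := fun w =>
  \sum_(l < k.+1) tpow z l w / (l`!)%:R.

Definition tlog (s : tens) : tens := fun w =>
  \sum_(l < k.+1 | (0 < l)%N)
     ((-1) ^+ l.+1 / (l%:R)) * tpow (tsub s tone) l w.

(* inverse of an element with constant term 1 (in particular of group
   elements): m^{-1} = sum_{l=0}^k (1 - m)^l *)
Definition tinv (m : tens) : tens := fun w =>
  \sum_(l < k.+1) tpow (tsub tone m) l w.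

Definition tbracket (a b : tens) : tens := tsub (tmul a b) (tmul b a).

Definition tgen (i : 'I_d) : tens :=
  fun w => if (0 < k)%N && (w == [:: i]) then 1 else 0.

Inductive in_lie : tens -> Prop :=
| lie_gen i : in_lie (tgen i)
| lie_zero : in_lie tzero
| lie_add a b : in_lie a -> in_lie b -> in_lie (tadd a b)
| lie_scale c a : in_lie a -> in_lie (tscale c a)
| lie_bracket a b : in_lie a -> in_lie b -> in_lie (tbracket a b).

Definition in_group (x : tens) : Prop := exists z, in_lie z /\ x = texp z.

Definition is_bary (N : nat) (xs : 'I_N -> tens) (m : tens) : Prop :=
  in_group m /\ (fun w => \sum_(i < N) tlog (tmul (tinv m) (xs i)) w) = tzero.

Definition bary (N : nat) (xs : 'I_N -> tens) : tens :=
  epsilon (inhabits tzero) (fun m => is_bary xs m /\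
                              forall m', is_bary xs m' -> m' = m).

End TruncTensor.

(* For z in g_{d,k} the map p |-> p(z) is a ring morphism from R[X] to T_{d,k}
   that kills X^(k+1), since z has no constant term.  Identities between truncated
   power series modulo X^(k+1) therefore transfer to T_{d,k}:
   exp(az) exp(bz) = exp((a+b)z), exp(z)^n = exp(nz), exp(cz)^-1 = exp(-cz) and
   log exp(cz) = cz, each proved through uniqueness of the solution of p' = cp
   modulo X^n.  For x = exp z and q = (u_1 + ... + u_N)/N this gives
   sum_i log(x^-q x^(u_i)) = (u_1 + ... + u_N - Nq) z = 0, so x^q is a barycentre.
   Barycentres are unique: if m and m' agree on all words shorter than w, then at w
   each log(m'^-1 x_i) differs from log(m^-1 x_i) only through the linear term of
   the series, by m w - m' w, and summing over i gives N (m w - m' w) = 0. *)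

From mathcomp Require Import all_boot all_order all_algebra.
From mathcomp Require Import reals.
From mathcomp Require Import zify ring.
From Stdlib Require Import ClassicalEpsilon FunctionalExtensionality.
Set Implicit Arguments. Unset Strict Implicit. Unset Printing Implicit Defensive.
Import Order.TTheory GRing.Theory Num.Theory.
Local Open Scope ring_scope.

Section DivisibilityByXn.
Variable R : fieldType.
Implicit Types p q : {poly R}.

Lemma dvdXnP n p : reflect (forall i, (i < n)%N -> p`_i = 0) ('X^n %| p).
Proof.
apply: (iffP (dvdpP _ _)) => [[q ->] i lt_in|p0]; first by rewrite coefMXn lt_in.
exists (drop_poly n p); rewrite -[LHS](poly_take_drop n) addrC -[RHS]addr0.
congr (_ + _); apply/polyP => i; rewrite coef_take_poly coef0.
by case: ltnP => // /p0.
Qed.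

Lemma dvdXP p : reflect (p`_0 = 0) ('X %| p).
Proof. by rewrite -['X]expr1; apply: (iffP (dvdXnP 1 p)) => [->|p0 []]. Qed.

Lemma dvdXn_geometric m q : 'X %| q -> 'X^m %| (1 - q) * \sum_(l < m) q ^+ l - 1.
Proof.
move=> Xq; have -> : (1 - q) * \sum_(l < m) q ^+ l - 1 = - q ^+ m.
  by rewrite -[q ^+ m](subrK 1) subrX1; ring.
by rewrite dvdpNr dvdp_exp2r.
Qed.

End DivisibilityByXn.

Section TruncatedSeries.
Variables (R : numFieldType) (n : nat).
Implicit Types p q : {poly R}.

Lemma dvdXn_ode m (c : R) p :
  p`_0 = 0 -> 'X^m %| p^`() - c%:P * p -> 'X^(m.+1) %| p.
Proof.
move=> p0 /dvdXnP ode; apply/dvdXnP; elim=> [//|i IH] lt_im.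
have := ode i (ltnSE lt_im).
rewrite coefB coef_deriv coefCM IH ?mulr0 ?subr0 1?ltnW //.
by move/eqP; rewrite mulrn_eq0 /= => /eqP.
Qed.

Definition exp_series (c : R) : {poly R} := \poly_(i < n.+1) (c ^+ i / i`!%:R).

Definition inv_series p : {poly R} := \sum_(l < n.+1) (1 - p) ^+ l.

Definition log_series p : {poly R} :=
  \sum_(l < n.+1 | (0 < l)%N) ((-1) ^+ l.+1 / l%:R) *: (p - 1) ^+ l.

Lemma exp_series_coef0 c : (exp_series c)`_0 = 1.
Proof. by rewrite coef_poly /= expr0 mul1r invr1. Qed.

Lemma exp_series0 : exp_series 0 = 1.
Proof.
apply/polyP => i; rewrite coef_poly coef1.
by case: i => [|i]; rewrite ?expr0 ?invr1 ?mulr1 ?if_same // expr0n mul0r if_same.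
Qed.

Lemma exp_series_ode c : 'X^n %| (exp_series c)^`() - c%:P * exp_series c.
Proof.
apply/dvdXnP => i lt_in; rewrite coefB coef_deriv coefCM !coef_poly !ltnS lt_in ltnW //.
rewrite factS natrM exprS -[X in X - _]mulr_natr.
have i1_neq0 : (i.+1%:R : R) != 0 by rewrite pnatr_eq0.
have fact_neq0 : ((i`!)%:R : R) != 0 by rewrite pnatr_eq0 -lt0n fact_gt0.
field; by rewrite fact_neq0 addrC natr1 i1_neq0.
Qed.

Lemma exp_seriesD a b : 'X^(n.+1) %| exp_series a * exp_series b - exp_series (a + b).
Proof.
apply: (dvdXn_ode (c := a + b)).
  by rewrite coefB coefM big_ord1 !exp_series_coef0 mulr1 subrr.
have -> : (exp_series a * exp_series b - exp_series (a + b))^`() -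
    (a + b)%:P * (exp_series a * exp_series b - exp_series (a + b)) =
    ((exp_series a)^`() - a%:P * exp_series a) * exp_series b
    + exp_series a * ((exp_series b)^`() - b%:P * exp_series b)
    - ((exp_series (a + b))^`() - (a + b)%:P * exp_series (a + b)).
  by rewrite derivB derivM polyCD; ring.
by apply: dvdp_sub; [apply: dvdp_add; [apply: dvdp_mulr | apply: dvdp_mull] |];
  apply: exp_series_ode.
Qed.

Lemma exp_series_pow m : 'X^(n.+1) %| exp_series 1 ^+ m - exp_series m%:R.
Proof.
elim: m => [|m IH]; first by rewrite exp_series0 subrr dvdp0.
have -> : exp_series 1 ^+ m.+1 - exp_series m.+1%:R =
    exp_series 1 * (exp_series 1 ^+ m - exp_series m%:R)
    + (exp_series 1 * exp_series m%:R - exp_series (1 + m%:R)).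
  by rewrite exprS -natr1 [_ + 1]addrC; ring.
by rewrite dvdp_add ?dvdp_mull ?exp_seriesD.
Qed.

Lemma inv_seriesK p : p`_0 = 1 -> 'X^(n.+1) %| p * inv_series p - 1.
Proof.
move=> p0; rewrite {1}(_ : p = 1 - (1 - p)); last by ring.
by apply: dvdXn_geometric; apply/dvdXP; rewrite coefB coef1 p0 subrr.
Qed.

Lemma inv_series_exp c : 'X^(n.+1) %| inv_series (exp_series c) - exp_series (- c).
Proof.
set I := inv_series (exp_series c).
have -> : I - exp_series (- c) =
    - (I * (exp_series c * exp_series (- c) - exp_series (c + - c)))
    + exp_series (- c) * (exp_series c * I - 1).
  by rewrite addrN exp_series0; ring.
by rewrite dvdp_add ?dvdpNr ?dvdp_mull ?exp_seriesD ?inv_seriesK ?exp_series_coef0.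
Qed.

Lemma log_series_exp c : 'X^(n.+1) %| log_series (exp_series c) - c *: 'X.
Proof.
set E := exp_series c; set f := E - 1.
have Xf : 'X %| f by apply/dvdXP; rewrite coefB coef1 exp_series_coef0 subrr.
(* log E - cX vanishes at 0 and its derivative E'/E - c vanishes modulo X^n. *)
apply: (dvdXn_ode (c := 0)).
  rewrite coefB coefZ coefX mulr0 subr0 coef_sum big1 // => l l_gt0.
  by rewrite coefZ; move/dvdXP: (dvdp_exp l_gt0 Xf) => ->; rewrite mulr0.
set S := \sum_(m < n) (- f) ^+ m.
rewrite mul0r subr0 derivB.
have -> : (log_series E)^`() = f^`() * S.
  rewrite raddf_sum big_mkcond big_ord_recl /= add0r mulr_sumr.
  apply: eq_bigr => m _; rewrite derivZ deriv_exp /= -scaler_nat scalerA.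
  rewrite /bump /= add1n mulfVK ?pnatr_eq0 // !exprS !mulN1r opprK.
  by rewrite add0n -/f -[- f]scaleN1r exprZn scalerAr.
have -> : f^`() * S - (c *: 'X)^`() =
    (E^`() - c%:P * E) * S + c%:P * (E * S - 1).
  by rewrite derivB derivC derivZ derivX -mul_polyC mulr1 subr0; ring.
apply: dvdp_add; first by apply: dvdp_mulr; apply: exp_series_ode.
apply/dvdp_mull; rewrite {1}(_ : E = 1 - - f); last by rewrite /f; ring.
by apply: dvdXn_geometric; rewrite dvdpNr.
Qed.

End TruncatedSeries.

Section TruncatedTensorAlgebra.
Variables (R : realType) (d k : nat).
Local Notation tens := (tens R d).
Local Notation tone := (@tone R d).
Local Notation tzero := (@tzero R d).
Implicit Types (a b c m y : tens) (w : seq 'I_d).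

Definition truncated a := forall w, (k < size w)%N -> a w = 0.

Lemma truncated_tmul a b : truncated (tmul k a b).
Proof. by move=> w hw; rewrite /tmul leqNgt hw. Qed.

Lemma truncated_tone : truncated tone.
Proof. by case. Qed.

Lemma truncated_tpow a n : truncated (tpow k a n).
Proof. by case: n => [|n]; [exact: truncated_tone | exact: truncated_tmul]. Qed.

Lemma tmul_nil a b : tmul k a b [::] = a [::] * b [::].
Proof. by rewrite /tmul big_ord1 take0 drop0. Qed.

Lemma tpow_nil a n : tpow k a n [::] = a [::] ^+ n.
Proof.
elim: n => [|n IH] /=; first by rewrite /tone eqxx expr0.
by rewrite tmul_nil IH exprS.
Qed.

Lemma tinv_nil m : m [::] = 1 -> tinv k m [::] = 1.
Proof.
move=> m1; rewrite /tinv big_ord_recl big1 ?addr0 => [|l _].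
  by rewrite tpow_nil /tsub /tone eqxx m1 subrr expr0.
by rewrite tpow_nil /tsub /tone eqxx m1 subrr expr0n.
Qed.

Lemma texp_nil y : y [::] = 0 -> texp k y [::] = 1.
Proof.
move=> y0; rewrite /texp big_ord_recl big1 => [|l _]; rewrite tpow_nil y0.
  by rewrite expr0 invr1 mulr1 addr0.
by rewrite expr0n mul0r.
Qed.

Lemma tmulA a b c : tmul k a (tmul k b c) = tmul k (tmul k a b) c.
Proof.
apply: functional_extensionality => w; rewrite /tmul.
case: leqP => hw //; set n := size w.
pose G (j i : nat) := a (take j w) * b (take (i - j) (drop j w)) * c (drop i w).
transitivity (\sum_(j < n.+1) \sum_(i < n.+1 | (j <= i)%N) G j i).
  apply: eq_bigr => j _; have hj : (j <= n)%N by rewrite -ltnS.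
  rewrite size_drop ifT; last by lia.
  rewrite mulr_sumr.
  transitivity (\sum_(j <= i < n.+1) G j i); last by rewrite big_geq_mkord.
  have := big_addn 0 n.+1 j xpredT (G j); rewrite add0n => ->.
  rewrite subSn // big_mkord; apply: eq_bigr => i _.
  by rewrite /G mulrA drop_drop addnK.
transitivity (\sum_(i < n.+1) \sum_(j < n.+1 | (j <= i)%N) G j i).
  under eq_bigr do rewrite big_mkcond.
  under [RHS]eq_bigr do rewrite big_mkcond.
  exact: exchange_big.
apply: eq_bigr => i _; have hi : (i <= n)%N by rewrite -ltnS.
rewrite size_takel // ifT; last by lia.
rewrite mulr_suml (big_ord_widen n.+1
  (fun j => a (take j (take i w)) * b (drop j (take i w)) * c (drop i w))) //.
apply: eq_big => [j|j hji]; first by rewrite ltnS.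
by rewrite /G take_takel // take_drop subnK.
Qed.

Lemma tmulr1 a : truncated a -> tmul k a tone = a.
Proof.
move=> ha; apply: functional_extensionality => w; rewrite /tmul.
case: leqP => hw; last by rewrite ha.
rewrite big_ord_recr /= take_size drop_size /tone eqxx mulr1 big1 ?add0r //.
move=> i _; rewrite ifN ?mulr0 //.
by rewrite -size_eq0 size_drop /= subn_eq0 -ltnNge.
Qed.

Lemma tmul1r a : truncated a -> tmul k tone a = a.
Proof.
move=> ha; apply: functional_extensionality => w; rewrite /tmul.
case: leqP => hw; last by rewrite ha.
rewrite big_ord_recl /= take0 drop0 /tone eqxx mul1r big1 ?addr0 //.
move=> i _; rewrite ifN ?mul0r // -size_eq0 size_take; case: ifP => // _.
by rewrite -lt0n (leq_ltn_trans _ (ltn_ord i)).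
Qed.

Lemma tmul0r b : tmul k tzero b = tzero.
Proof.
apply: functional_extensionality => w; rewrite /tmul; case: ifP => _ //.
by rewrite big1 // => j _; rewrite mul0r.
Qed.

Lemma tmulDl a b c : tmul k (tadd a b) c = tadd (tmul k a c) (tmul k b c).
Proof.
apply: functional_extensionality => w; rewrite /tadd /tmul.
case: ifP => _; last by rewrite addr0.
by rewrite -big_split; apply: eq_bigr => j _; rewrite mulrDl.
Qed.

Lemma tmulZl (r : R) a b : tmul k (tscale r a) b = tscale r (tmul k a b).
Proof.
apply: functional_extensionality => w; rewrite /tscale /tmul.
case: ifP => _; last by rewrite mulr0.
by rewrite mulr_sumr; apply: eq_bigr => j _; rewrite mulrA.
Qed.

Lemma tmulZr (r : R) a b : tmul k a (tscale r b) = tscale r (tmul k a b).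
Proof.
apply: functional_extensionality => w; rewrite /tscale /tmul.
case: ifP => _; last by rewrite mulr0.
by rewrite mulr_sumr; apply: eq_bigr => j _; rewrite mulrCA.
Qed.

Lemma tmul_sumr (I : finType) (P : pred I) (F : I -> tens) a :
  tmul k a (fun w => \sum_(i | P i) F i w) = fun w => \sum_(i | P i) tmul k a (F i) w.
Proof.
apply: functional_extensionality => w; rewrite /tmul; case: ifP => _.
  by rewrite exchange_big; apply: eq_bigr => j _; rewrite mulr_sumr.
by rewrite big1.
Qed.

Lemma tpowZ (r : R) a n : tpow k (tscale r a) n = tscale (r ^+ n) (tpow k a n).
Proof.
elim: n => [|n IH] /=; first by apply: functional_extensionality => w; rewrite /tscale mul1r.
rewrite IH tmulZl tmulZr; apply: functional_extensionality => w.
by rewrite /tscale exprS mulrA.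
Qed.

Lemma tpow_eq0 a n w : a [::] = 0 -> (size w < n)%N -> tpow k a n w = 0.
Proof.
move=> a0; elim: n w => [//|n IH] w hw /=; rewrite /tmul; case: ifP => _ //.
rewrite big1 // => j _; case: (posnP j) => [->|hj]; first by rewrite take0 a0 mul0r.
by rewrite IH ?mulr0 // size_drop; have := ltn_ord j; lia.
Qed.

Lemma tpow_nilpotent a : a [::] = 0 -> tpow k a k.+1 = tzero.
Proof.
move=> a0; apply: functional_extensionality => w.
by case: (ltnP k (size w)) => hw; [apply: truncated_tpow | apply: tpow_eq0].
Qed.

Lemma lie_nil_truncated z : in_lie k z -> z [::] = 0 /\ truncated z.
Proof.
elim => [i| |a b _ [a0 ha] _ [b0 hb]|r a _ [a0 ha]|a b _ _ _ _].
- split=> [|w hw]; rewrite /tgen ?andbF //.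
  by case: andP => // -[k_gt0 /eqP ew]; move: hw; rewrite ew /=; lia.
- by [].
- by split=> [|w hw]; rewrite /tadd ?a0 ?b0 ?ha ?hb ?addr0.
- by split=> [|w hw]; rewrite /tscale ?a0 ?ha ?mulr0.
- split=> [|w hw]; rewrite /tbracket /tsub ?tmul_nil ?[b _ * _]mulrC ?subrr //.
  by rewrite !truncated_tmul ?subrr.
Qed.

Lemma in_group_nil_truncated m : in_group k m -> m [::] = 1 /\ truncated m.
Proof.
case=> y [/lie_nil_truncated [y0 _] ->]; split; first exact: texp_nil.
by move=> w hw; rewrite /texp big1 // => l _; rewrite truncated_tpow ?mul0r.
Qed.

End TruncatedTensorAlgebra.

Section PolynomialCalculus.
Variables (R : realType) (d k : nat) (z : tens R d).
Hypotheses (z0 : z [::] = 0) (trz : truncated k z).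
Local Notation tone := (@tone R d).
Local Notation tzero := (@tzero R d).
Implicit Types p q : {poly R}.

Definition teval p : tens R d := fun w => \sum_(i < k.+1) p`_i * tpow k z i w.

Lemma truncated_teval p : truncated k (teval p).
Proof. by move=> w hw; rewrite /teval big1 // => i _; rewrite truncated_tpow ?mulr0. Qed.

Lemma tevalD p q : teval (p + q) = tadd (teval p) (teval q).
Proof.
apply: functional_extensionality => w; rewrite /tadd /teval -big_split.
by apply: eq_bigr => i _; rewrite coefD mulrDl.
Qed.

Lemma tevalB p q : teval (p - q) = tsub (teval p) (teval q).
Proof.
apply: functional_extensionality => w; rewrite /tsub /teval -sumrB.
by apply: eq_bigr => i _; rewrite coefB mulrBl.
Qed.

Lemma tevalZ (c : R) p : teval (c *: p) = tscale c (teval p).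
Proof.
apply: functional_extensionality => w; rewrite /tscale /teval mulr_sumr.
by apply: eq_bigr => i _; rewrite coefZ mulrA.
Qed.

Lemma teval0 : teval 0 = tzero.
Proof.
apply: functional_extensionality => w.
by rewrite /teval big1 // => i _; rewrite coef0 mul0r.
Qed.

Lemma teval_sum (I : finType) (P : pred I) (F : I -> {poly R}) :
  teval (\sum_(i | P i) F i) = fun w => \sum_(i | P i) teval (F i) w.
Proof.
apply: functional_extensionality => w; rewrite /teval exchange_big.
by apply: eq_bigr => i _; rewrite coef_sum mulr_suml.
Qed.

Lemma teval1 : teval 1 = tone.
Proof.
apply: functional_extensionality => w; rewrite /teval big_ord_recl /= coef1 mul1r.
by rewrite big1 ?addr0 // => i _; rewrite coef1 mul0r.
Qed.

Lemma tevalX : teval 'X = z.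
Proof.
apply: functional_extensionality => w; rewrite /teval.
case: (posnP k) => [k0|k_gt0].
  rewrite big1 => [|i _]; first by case: w => [|x w]; rewrite ?z0 ?trz ?k0.
  by rewrite coefX (_ : nat_of_ord i = 0%N) ?mul0r //; have := ltn_ord i; lia.
rewrite (bigD1 (Ordinal (k_gt0 : (1 < k.+1)%N))) //= coefX eqxx mul1r.
rewrite tmulr1 // big1 ?addr0 // => i /eqP ne_i1.
rewrite coefX (_ : nat_of_ord i == 1%N = false) ?mul0r //.
by apply/eqP => i1; apply: ne_i1; apply: val_inj.
Qed.

Lemma teval_mulX p : teval ('X * p) = tmul k z (teval p).
Proof.
apply: functional_extensionality => w; rewrite /teval tmul_sumr.
under [RHS]eq_bigr => i _ do rewrite tmulZr.
rewrite big_ord_recl big_ord_recr /= coefXM eqxx mul0r add0r.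
rewrite /tscale -[tmul k z _]/(tpow k z k.+1) tpow_nilpotent // mulr0 addr0.
by apply: eq_bigr => i _; rewrite coefXM.
Qed.

Lemma teval_mul p q : teval (p * q) = tmul k (teval p) (teval q).
Proof.
elim/poly_ind: p q => [|p c IH] q; first by rewrite mul0r teval0 tmul0r.
rewrite mulrDl -mulrA tevalD IH teval_mulX mul_polyC tevalZ.
rewrite tevalD IH tevalX -[c%:P]mulr1 mul_polyC tevalZ teval1.
by rewrite tmulDl tmulZl tmul1r ?tmulA //; apply: truncated_teval.
Qed.

Lemma teval_pow p n : tpow k (teval p) n = teval (p ^+ n).
Proof.
elim: n => [|n IH]; first by rewrite expr0 teval1.
by rewrite /= IH exprS teval_mul.
Qed.

Lemma teval_dvdXn p q : 'X^(k.+1) %| p - q -> teval p = teval q.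
Proof.
move=> /dvdXnP pq; apply: functional_extensionality => w.
by apply: eq_bigr => i _; apply/eqP; rewrite -subr_eq0 -mulrBl -coefB pq ?mul0r.
Qed.

Lemma texp_teval (c : R) : texp k (tscale c z) = teval (exp_series k c).
Proof.
apply: functional_extensionality => w; rewrite /texp /teval; apply: eq_bigr => i _.
by rewrite tpowZ coef_poly ltn_ord /tscale mulrAC.
Qed.

Lemma tinv_teval p : tinv k (teval p) = teval (inv_series k p).
Proof.
rewrite teval_sum; apply: functional_extensionality => w; apply: eq_bigr => l _.
by rewrite -teval1 -tevalB teval_pow.
Qed.

Lemma tlog_teval p : tlog k (teval p) = teval (log_series k p).
Proof.
rewrite teval_sum; apply: functional_extensionality => w; apply: eq_bigr => l _.
by rewrite -teval1 -tevalB teval_pow tevalZ.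
Qed.

Lemma tpow_texp n : tpow k (texp k z) n = texp k (tscale n%:R z).
Proof.
have -> : texp k z = teval (exp_series k 1).
  rewrite -texp_teval; congr texp.
  by apply: functional_extensionality => w; rewrite /tscale mul1r.
by rewrite teval_pow texp_teval; apply: teval_dvdXn; apply: exp_series_pow.
Qed.

Lemma tmul_texp (a b : R) :
  tmul k (texp k (tscale a z)) (texp k (tscale b z)) = texp k (tscale (a + b) z).
Proof. by rewrite !texp_teval -teval_mul; apply: teval_dvdXn; apply: exp_seriesD. Qed.

Lemma tinv_texp (c : R) : tinv k (texp k (tscale c z)) = texp k (tscale (- c) z).
Proof. by rewrite !texp_teval tinv_teval; apply: teval_dvdXn; apply: inv_series_exp. Qed.

Lemma tlog_texp (c : R) : tlog k (texp k (tscale c z)) = tscale c z.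
Proof.
rewrite texp_teval tlog_teval -[in RHS]tevalX -tevalZ.
by apply: teval_dvdXn; apply: log_series_exp.
Qed.

End PolynomialCalculus.

Section FirstOrderPerturbation.
Variables (R : realType) (d k : nat).
Local Notation tens := (tens R d).
Local Notation tone := (@tone R d).
Implicit Types (a b m x : tens) (w : seq 'I_d).

Definition agree_below j a b := forall w, (size w < j)%N -> a w = b w.

Lemma agree_below_tmul j a a' b b' :
  agree_below j a a' -> agree_below j b b' -> agree_below j (tmul k a b) (tmul k a' b').
Proof.
move=> ha hb w hw; rewrite /tmul; case: ifP => // _; apply: eq_bigr => i _.
by rewrite ha ?hb // (leq_ltn_trans _ hw) // ?size_drop ?leq_subr // size_take_min geq_minr.
Qed.

Lemma agree_below_tpow j a a' n :
  agree_below j a a' -> agree_below j (tpow k a n) (tpow k a' n).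
Proof. by move=> ha; elim: n => [//|n IH]; apply: agree_below_tmul. Qed.

Lemma agree_below_tinv j m m' : agree_below j m m' -> agree_below j (tinv k m) (tinv k m').
Proof.
move=> hm w hw; apply: eq_bigr => l _; apply: agree_below_tpow hw => v hv.
by rewrite /tsub hm.
Qed.

Variable w : seq 'I_d.
Hypotheses (w_gt0 : (0 < size w)%N) (w_le_k : (size w <= k)%N).

Lemma tmul_pertr a b b' : agree_below (size w) b b' ->
  tmul k a b' w - tmul k a b w = a [::] * (b' w - b w).
Proof.
move=> hb; rewrite /tmul w_le_k -sumrB big_ord_recl /= take0 drop0 -mulrBr.
rewrite big1 ?addr0 // => i _; rewrite hb ?subrr ?mulr0 // size_drop /bump /=.
by have := ltn_ord i; lia.
Qed.

Lemma tmul_pertl a a' b : agree_below (size w) a a' ->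
  tmul k a' b w - tmul k a b w = (a' w - a w) * b [::].
Proof.
move=> ha; rewrite /tmul w_le_k -sumrB big_ord_recr /= take_size drop_size -mulrBl.
rewrite big1 ?add0r // => i _; rewrite ha ?subrr ?mul0r // size_takel /=.
  exact: ltn_ord.
by have := ltn_ord i; lia.
Qed.

Lemma tmul_pert a a' b b' : agree_below (size w) a a' -> agree_below (size w) b b' ->
  tmul k a' b' w - tmul k a b w = a [::] * (b' w - b w) + (a' w - a w) * b [::].
Proof.
move=> ha hb; have -> : tmul k a' b' w - tmul k a b w =
    (tmul k a' b' w - tmul k a' b w) + (tmul k a' b w - tmul k a b w) by ring.
by rewrite (tmul_pertr _ hb) (tmul_pertl _ ha) (ha [::]).
Qed.

Lemma tpow_pert a a' l : a [::] = 0 -> agree_below (size w) a a' ->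
  tpow k a' l w - tpow k a l w = (l == 1%N)%:R * (a' w - a w).
Proof.
move=> a0 ha; elim: l => [|l IH]; first by rewrite subrr mul0r.
rewrite /= (tmul_pert ha (agree_below_tpow l ha)) IH tpow_nil a0 mul0r add0r.
by rewrite expr0n eqSS mulrC.
Qed.

Lemma sum_delta1 (P : pred nat) (F : nat -> R) : P 1%N ->
  \sum_(l < k.+1 | P l) (l == 1 :> nat)%:R * F l = F 1%N.
Proof.
move=> P1; under eq_bigr do rewrite mulr_natl mulrb.
by rewrite -big_mkcondr big_ord1_cond_eq P1 ltnS (leq_trans w_gt0 w_le_k).
Qed.

Lemma tinv_pert m m' : m [::] = 1 -> agree_below (size w) m m' ->
  tinv k m' w - tinv k m w = m w - m' w.
Proof.
move=> m1 hm; have a0 : tsub tone m [::] = 0 by rewrite /tsub m1 subrr.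
have ha : agree_below (size w) (tsub tone m) (tsub tone m') by move=> v hv; rewrite /tsub hm.
rewrite /tinv -sumrB; under eq_bigr do rewrite (tpow_pert _ a0 ha).
rewrite (@sum_delta1 xpredT (fun=> tsub tone m' w - tsub tone m w)) //.
by rewrite /tsub opprB addrC subrKA.
Qed.

Lemma tlog_pert s s' : s [::] = 1 -> agree_below (size w) s s' ->
  tlog k s' w - tlog k s w = s' w - s w.
Proof.
move=> s1 hs; have a0 : tsub s tone [::] = 0 by rewrite /tsub s1 /tone eqxx subrr.
have ha : agree_below (size w) (tsub s tone) (tsub s' tone) by move=> v hv; rewrite /tsub hs.
rewrite /tlog -sumrB; under eq_bigr do rewrite -mulrBr (tpow_pert _ a0 ha) mulrCA.
rewrite (@sum_delta1 _ (fun l => (-1) ^+ l.+1 / l%:R * _)) //.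
by rewrite /tsub expr2 mulN1r opprK invr1 !mul1r; ring.
Qed.

Lemma tlog_tinv_pert m m' x : m [::] = 1 -> x [::] = 1 -> agree_below (size w) m m' ->
  tlog k (tmul k (tinv k m') x) w - tlog k (tmul k (tinv k m) x) w = m w - m' w.
Proof.
move=> m1 x1 hm; have hinv := agree_below_tinv hm.
have hx : agree_below (size w) x x by [].
rewrite tlog_pert ?tmul_nil ?tinv_nil ?x1 ?mulr1 //; last exact: agree_below_tmul.
by rewrite (tmul_pert hinv hx) subrr mulr0 add0r tinv_pert // x1 mulr1.
Qed.

End FirstOrderPerturbation.

Section Barycentre.
Variables (R : realType) (d k N : nat).
Local Notation tens := (tens R d).
Implicit Types (xs : 'I_N -> tens) (m : tens).

Lemma is_bary_unique xs m m' : (0 < N)%N -> (forall i, xs i [::] = 1) ->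
  is_bary k xs m -> is_bary k xs m' -> m = m'.
Proof.
move=> N_gt0 xs1 [/in_group_nil_truncated [m1 trm] bm].
move=> [/in_group_nil_truncated [m1' trm'] bm'].
suff agree n : agree_below n m m'.
  by apply: functional_extensionality => w; apply: (agree (size w).+1).
elim: n => [//|n IH] w; rewrite ltnS leq_eqVlt => /predU1P [ew|]; last exact: IH.
case: (posnP n) => [n0|n_gt0].
  by move: ew; rewrite n0 => /size0nil ->; rewrite m1 m1'.
case: (leqP n k) => [n_le_k|k_lt_n]; last by rewrite trm ?trm' ?ew.
rewrite -{}ew in n_gt0 n_le_k IH.
move: bm bm' => /(congr1 (fun f => f w)) /= bm /(congr1 (fun f => f w)) /= bm'.
have := congr2 (fun a b => a - b) bm' bm; rewrite /= -sumrB subrr.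
under eq_bigr do rewrite tlog_tinv_pert //.
rewrite sumr_const card_ord => /eqP; rewrite mulrn_eq0 eqn0Ngt N_gt0 subr_eq0.
by move/eqP.
Qed.

Lemma bary_eq xs m : (0 < N)%N -> (forall i, xs i [::] = 1) ->
  is_bary k xs m -> bary k xs = m.
Proof.
move=> N_gt0 xs1 bm; have uniq m' : is_bary k xs m' -> m' = m.
  by move=> bm'; apply: is_bary_unique bm.
rewrite /bary; have [/uniq //] := epsilon_spec (inhabits (@tzero R d))
  (fun m => is_bary k xs m /\ forall m', is_bary k xs m' -> m' = m)
  (ex_intro _ m (conj bm uniq)).
Qed.

Lemma is_bary_texp (z : tens) (u : 'I_N -> nat) q : in_lie k z ->
  (\sum_(i < N) u i = q * N)%N ->
  is_bary k (fun i => texp k (tscale (u i)%:R z)) (texp k (tscale q%:R z)).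
Proof.
move=> lie_z sum_u; have [z0 trz] := lie_nil_truncated lie_z.
split; first by exists (tscale q%:R z); split; first exact: lie_scale.
apply: functional_extensionality => w.
under eq_bigr do rewrite tinv_texp // tmul_texp // tlog_texp //.
rewrite /tscale /tzero -mulr_suml big_split sumr_const card_ord /= -natr_sum sum_u.
by rewrite natrM; ring.
Qed.

End Barycentre.

Theorem proposition4p5 (R : realType) (d k N : nat) (x : tens R d)
    (u : 'I_N -> nat) :
  (0 < N)%N ->
  in_group k x ->
  (N %| \sum_(i < N) u i)%N ->
  bary k (fun i => tpow k x (u i)) = tpow k x ((\sum_(i < N) u i) %/ N)%N.
Proof.
move=> N_gt0 [z [lie_z ->]] N_dvd_sum.
have [z0 trz] := lie_nil_truncated lie_z.
have -> : (fun i => tpow k (texp k z) (u i)) = fun i => texp k (tscale (u i)%:R z).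
  by apply: functional_extensionality => i; apply: tpow_texp.
rewrite tpow_texp //; apply: bary_eq => //.
  by move=> i; rewrite texp_nil // /tscale z0 mulr0.
by apply: is_bary_texp; rewrite // divnK.
Qed.
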